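(* Let $P$ be a Poisson bracket on $\mathbb{R}^n$, let $\ast_\nu$ be a star-product on $(\mathbb{R}^n,P)$, and let $\odot_\nu$ be the sun-product associated to $\ast_\nu$, defined on $\mathsf{N}^0_\nu$. Then $\odot_\nu$ is an Abelian, associative product on $\mathsf{N}^0_\nu$; it is $\mathbb{R}$-bilinear but fails to be $\mathbb{R}[[\nu]]$-bilinear. Consequently $\mathsf{N}^0_\nu$ endowed with $\odot_\nu$ is an Abelian $\mathbb{R}$-algebra.
   Context: Let $\mathsf{N}=C^\infty(\mathbb{R}^n)$ (real-valued), with coordinates $x_1,\dots,x_n$, and $\mathsf{Pol}=\mathbb{R}[x_1,\dots,x_n]\subset\mathsf{N}$. For a formal parameter $\nu$, $\mathsf{N}_\nu=\mathsf{N}[[\nu]]$, and $\mathsf{N}^0_\nu\subset\mathsf{N}_\nu$ is the subalgebra of formal series whose $\nu^0$-coefficient lies in $\mathsf{Pol}$; $\pi:\mathsf{N}_\nu\to\mathsf{N}$ is the projection onto the $\nu^0$-coefficient. A (differential) star-product on $(\mathbb{R}^n,P)$ is a bilinear map $f\ast_\nu g=\sum_{r\ge0}\nu^rC_r(f,g)$ from $\mathsf{N}\times\mathsf{N}$ to $\mathsf{N}[[\nu]]$, extended $\mathbb{R}[[\nu]]$-bilinearly to $\mathsf{N}_\nu$, where the $C_r$ are bidifferential operators with: $C_0(f,g)=fg$; $C_r(c,f)=C_r(f,c)=0$ for $r\ge1$ and constants $c$; associativity $\sum_{s+t=r}C_s(C_t(f,g),h)=\sum_{s+t=r}C_s(f,C_t(g,h))$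 for all $r\ge0$; and $C_1(f,g)-C_1(g,f)=2P(f,g)$. Let $\mathcal{S}(\mathsf{Pol})$ be the symmetric tensor algebra over $\mathsf{Pol}$ with product $\otimes$, let $\lambda:\mathsf{Pol}\to\mathcal{S}(\mathsf{Pol})$ be the $\mathbb{R}$-algebra homomorphism with $\lambda(x_1^{k_1}\cdots x_n^{k_n})=x_1^{\otimes k_1}\otimes\cdots\otimes x_n^{\otimes k_n}$, and let $T_{\ast_\nu}:\mathcal{S}(\mathsf{Pol})\to\mathsf{N}^0_\nu$ be the $\mathbb{R}$-linear map with $T_{\ast_\nu}(I)=1$ ($I$ the unit of $\mathcal{S}(\mathsf{Pol})$) and $T_{\ast_\nu}(f_1\otimes\cdots\otimes f_k)=\frac1{k!}\sum_{\sigma\in S_k}f_{\sigma(1)}\ast_\nu\cdots\ast_\nu f_{\sigma(k)}$ for $f_i\in\mathsf{Pol}$. The sun-product associated to $\ast_\nu$ is $f\odot_\nu g=T_{\ast_\nu}(\lambda(\pi(f))\otimes\lambda(\pi(g)))$ for $f,g\in\mathsf{N}^0_\nu$. *)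

From HB Require Import structures.
From mathcomp Require Import all_boot all_order all_algebra all_fingroup.
From mathcomp Require Import all_classical all_reals all_analysis.
Set Implicit Arguments. Unset Strict Implicit. Unset Printing Implicit Defensive.
Import Order.TTheory GRing.Theory Num.Theory numFieldNormedType.Exports.
Local Open Scope ring_scope.

Section Defs.
Variables (R : realType) (n : nat).

Notation X := 'rV[R]_n.
Notation fn := (X -> R).

Definition iterD (s : seq 'I_n) (f : fn) : fn :=
  foldr (fun i g => fun x => 'D_(delta_mx 0 i) g x) f s.

Definition smooth (f : fn) : Prop :=
  forall s : seq 'I_n, continuous (iterD s f) /\
    forall (i : 'I_n) (x : X), derivable (iterD s f) x (delta_mx 0 i).

Definition mi_seq (k : nat) (a : {ffun 'I_n -> 'I_k}) : seq 'I_n :=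
  flatten [seq nseq (a i) i | i <- enum 'I_n].
Definition pdiff (k : nat) (a : {ffun 'I_n -> 'I_k}) (f : fn) : fn :=
  iterD (mi_seq a) f.

Definition bidifferential (B : fn -> fn -> fn) : Prop :=
  forall x0 : X, exists2 e : R, 0 < e &
    exists k : nat, exists c : {ffun 'I_n -> 'I_k} -> {ffun 'I_n -> 'I_k} -> fn,
      (forall a b, smooth (c a b)) /\
      forall f g : fn, smooth f -> smooth g ->
        forall x : X, ball x0 e x ->
          B f g x = \sum_(a : {ffun 'I_n -> 'I_k}) \sum_(b : {ffun 'I_n -> 'I_k})
                      c a b x * pdiff a f x * pdiff b g x.

Definition cst_fn (c : R) : fn := fun _ => c.

Definition is_poisson (P : fn -> fn -> fn) : Prop :=
  [/\ (forall f g, smooth f -> smooth g -> smooth (P f g)),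
      (forall (a b : R) f g h, smooth f -> smooth g -> smooth h ->
          P (a *: f + b *: g) h = a *: P f h + b *: P g h),
      (forall f g, smooth f -> smooth g -> P f g = - P g f),
      (forall f g h, smooth f -> smooth g -> smooth h ->
          P f (g * h) = P f g * h + g * P f h) &
      (forall f g h, smooth f -> smooth g -> smooth h ->
          P f (P g h) + P g (P h f) + P h (P f g) = 0)].

Definition is_star_product (P : fn -> fn -> fn) (C : nat -> fn -> fn -> fn)
  : Prop :=
  (forall r f g, smooth f -> smooth g -> smooth (C r f g)) /\
      (forall r, bidifferential (C r)) /\
      (forall r (a b : R) f g h, smooth f -> smooth g -> smooth h ->
          C r (a *: f + b *: g) h = a *: C r f h + b *: C r g h /\
          C r h (a *: f + b *: g) = a *: C r h f + b *: C r h g) /\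
      (forall f g, smooth f -> smooth g -> C 0%N f g = f * g) /\
      (forall r (c : R) f, (1 <= r)%N -> smooth f ->
          C r (cst_fn c) f = 0 /\ C r f (cst_fn c) = 0) /\
      (forall r f g h, smooth f -> smooth g -> smooth h ->
          \sum_(s < r.+1) C s (C (r - s) f g) h =
          \sum_(s < r.+1) C s f (C (r - s) g h)) /\
      (forall f g, smooth f -> smooth g -> C 1%N f g - C 1%N g f = 2%:R *: P f g).

(* a series is the sequence of its coefficients: F m is the nu^m-coefficient *)
Definition series := nat -> fn.

Definition Nnu (F : series) : Prop := forall m, smooth (F m).

(* polynomial functions  Pol  (l lists coefficient / exponent pairs) *)
Definition monomial (k : {ffun 'I_n -> nat}) : fn :=
  fun x => \prod_(i < n) (x ord0 i) ^+ (k i).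
Definition is_polyrep (l : seq (R * {ffun 'I_n -> nat})) (h : fn) : Prop :=
  h = fun x => \sum_(a <- l) a.1 * monomial a.2 x.
Definition Pol (h : fn) : Prop := exists l, is_polyrep l h.

Definition N0 (F : series) : Prop := Nnu F /\ Pol (F 0%N).

Definition proj (F : series) : fn := F 0%N.

Definition cser (f : fn) : series := fun m => if m is 0%N then f else 0.

Definition sadd (F G : series) : series := fun m => F m + G m.
Definition sscale (a : R) (F : series) : series := fun m => a *: F m.
Definition smul (a : nat -> R) (F : series) : series :=
  fun m => \sum_(i < m.+1) a i *: F (m - i)%N.

(* the star-product extended R[[nu]]-bilinearly to N_nu *)
Definition star (C : nat -> fn -> fn -> fn) (F G : series) : series :=
  fun m => \sum_(i < m.+1) \sum_(j < m.+1 | (i + j <= m)%N)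
             C (m - i - j)%N (F i) (G j).

Fixpoint starfold (C : nat -> fn -> fn -> fn) (s : seq fn) : series :=
  match s with
  | [::] => cser (cst_fn 1)
  | [:: f] => cser f
  | f :: s' => star C (cser f) (starfold C s')
  end.

(* Elements of S(Pol) are written as finite R-linear combinations of
   symmetric tensors f_1 (x) ... (x) f_k of polynomials; a combination is a
   list of (coefficient, [:: f_1; ...; f_k]); the empty sequence is I. *)
Definition tens := seq (R * seq fn).

Definition tens_mul (u v : tens) : tens :=
  [seq (a.1 * b.1, a.2 ++ b.2) | a <- u, b <- v].

Definition T_pure (C : nat -> fn -> fn -> fn) (s : seq fn) : series :=
  sscale ((size s)`!%:R^-1)
    (fun m => \sum_(sg : 'S_(size s))
       starfold C [seq nth 0 s (sg i) | i <- enum 'I_(size s)] m).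

Definition Tstar (C : nat -> fn -> fn -> fn) (u : tens) : series :=
  fun m => \sum_(a <- u) a.1 *: T_pure C a.2 m.

Definition coord (i : 'I_n) : fn := fun x => x ord0 i.

Definition lam_mono (k : {ffun 'I_n -> nat}) : seq fn :=
  flatten [seq nseq (k i) (coord i) | i <- enum 'I_n].

(* lambda extended R-linearly; a polynomial function h is expanded along a
   chosen coefficient representation *)
Definition lam (h : fn) : tens :=
  [seq (a.1, lam_mono a.2) | a <- xget [::] (fun l => is_polyrep l h)].

Definition sun (C : nat -> fn -> fn -> fn) (F G : series) : series :=
  Tstar C (tens_mul (lam (proj F)) (lam (proj G))).

End Defs.

From Pilot Require Import Defs.
From HB Require Import structures.
From mathcomp Require Import all_boot all_order all_algebra all_fingroup.
From mathcomp Require Import all_classical all_reals all_analysis.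
From mathcomp Require Import zify.
Import Order.TTheory GRing.Theory Num.Theory numFieldNormedType.Exports.

(** The sun-product only sees the nu^0-coefficients [F_0], [G_0], which are
    polynomials. As [lambda] turns products of monomials into concatenations of
    tensor factors and [T] is symmetric in these factors,
    [F . G = T (lambda (F_0 G_0))]; this does not depend on the coefficient list
    chosen for [F_0 G_0] because monomials are linearly independent.
    Commutativity, associativity and R-bilinearity are therefore inherited from
    the pointwise product of polynomials and the linearity of [T o lambda]. Since
    [C_0] is the pointwise product, the nu^0-coefficient of [T (lambda h)] is [h],
    so N^0_nu is closed under the product. Ignoring higher coefficients breaks
    R[[nu]]-bilinearity, and the Poisson bracket plays no role at all. *)

Set Implicit Arguments.
Unset Strict Implicit.
Local Open Scope ring_scope.

Section Smooth.
Variables (R : realType) (n : nat).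
Notation fn := ('rV[R]_n -> R).
Local Open Scope classical_set_scope.

Lemma iterD_lincomb (a b : R) (f g : fn) (s : seq 'I_n) : smooth f -> smooth g ->
  Defs.iterD s (a *: f + b *: g) = a *: Defs.iterD s f + b *: Defs.iterD s g.
Proof.
move=> sf sg; elim: s => [//|i s IH] /=; apply/funext => x; rewrite IH.
have [_ df] := sf s; have [_ dg] := sg s.
by rewrite deriveD ?deriveZ //; apply: derivableZ.
Qed.

Lemma smooth_lincomb (a b : R) (f g : fn) : smooth f -> smooth g ->
  smooth (a *: f + b *: g).
Proof.
move=> sf sg s; rewrite iterD_lincomb //.
have [cf df] := sf s; have [cg dg] := sg s; split.
  by move=> x; apply: continuousD; apply: continuousZl_tmp; [exact: cf|exact: cg].
by move=> i x; apply: derivableD; apply: derivableZ; [exact: df|exact: dg].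
Qed.

Lemma smooth_cst (c : R) : smooth (@cst_fn R n c).
Proof.
have iterD_cst s : exists c', Defs.iterD s (@cst_fn R n c) = cst c'.
  elim: s => [|i s [c' IH]] /=; first by exists c.
  by exists 0; apply/funext => x; rewrite IH; exact: derive_cst.
move=> s; have [c' ->] := iterD_cst s.
by split; [exact: cst_continuous | move=> i x; exact: derivable_cst].
Qed.

Lemma smooth0 : smooth (0 : fn).
Proof. exact: (smooth_cst 0). Qed.

Lemma smoothD (f g : fn) : smooth f -> smooth g -> smooth (f + g).
Proof. by move=> sf sg; have := smooth_lincomb 1 1 sf sg; rewrite !scale1r. Qed.

Lemma smoothZ (a : R) (f : fn) : smooth f -> smooth (a *: f).
Proof. by move=> sf; have := smooth_lincomb a 0 sf sf; rewrite scale0r addr0. Qed.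

Lemma smooth_sum (I : Type) (r : seq I) (P : pred I) (F : I -> fn) :
  (forall i, P i -> smooth (F i)) -> smooth (\sum_(i <- r | P i) F i).
Proof.
move=> sF; elim/big_rec: _ => [|i f Pi sf]; first exact: smooth0.
exact: smoothD (sF _ Pi) sf.
Qed.

Lemma coord_diffquot_cvg (i : 'I_n) (x v : 'rV[R]_n) :
  (fun h : R => h^-1 *: ((Defs.coord i \o shift x) (h *: v) - Defs.coord i x)) @ 0^'
    --> v ord0 i.
Proof.
apply: cvg_near_cst; near=> h.
have h0 : h != 0 by near: h; exact: nbhs_dnbhs_neq.
by rewrite /Defs.coord /= !mxE addrK [_ *: _]/GRing.scale /= mulKf.
Unshelve. all: by end_near.
Qed.

Lemma smooth_coord (i : 'I_n) : smooth (@Defs.coord R n i).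
Proof.
have derivable_coord x v : derivable (@Defs.coord R n i) x v.
  by apply/cvg_ex; eexists; exact: coord_diffquot_cvg.
have iterD_coord s : s = [::] \/ exists c, Defs.iterD s (@Defs.coord R n i) = cst c.
  elim: s => [|j s [->|[c IH]]]; [by left | right | right].
    exists ((delta_mx 0 j : 'rV[R]_n) ord0 i); apply/funext => x.
    by apply: cvg_lim; [exact: Rhausdorff | exact: coord_diffquot_cvg].
  by exists 0; apply/funext => x /=; rewrite IH; exact: derive_cst.
move=> s; case: (iterD_coord s) => [->|[c ->]]; split.
- by move=> x; exact: (@coord_continuous R 1 n ord0 i x).
- by move=> j x; exact: derivable_coord.
- exact: cst_continuous.
- by move=> j x; exact: derivable_cst.
Qed.

End Smooth.

Lemma sum_scale_by_key (R : pzRingType) (V : lmodType R) (K : eqType)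
    (Phi : K -> V) (l : seq (R * K)) :
  \sum_(a <- l) a.1 *: Phi a.2 =
  \sum_(k <- undup (map snd l)) (\sum_(a <- l | a.2 == k) a.1) *: Phi k.
Proof.
rewrite (eq_bigr (fun k => \sum_(a <- l) if a.2 == k then a.1 *: Phi k else 0));
  last by move=> k _; rewrite scaler_suml big_mkcond.
rewrite exchange_big /=; apply: eq_big_seq => a al.
rewrite (bigD1_seq a.2) ?undup_uniq ?mem_undup ?map_f //= eqxx big1 ?addr0 // => k.
by rewrite eq_sym => /negbTE ->.
Qed.

Section Digits.
Local Open Scope nat_scope.
Variable D : nat.

Lemma sum_digits_lt m (f : nat -> nat) :
  (forall i, i < m -> f i < D) -> \sum_(i < m) D ^ i * f i < D ^ m.
Proof.
elim: m => [|k IH] fD; first by rewrite big_ord0 expn0.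
rewrite big_ord_recr /= expnS.
have := IH (fun i lt => fD i (ltnW lt)); have := fD k (ltnSn k).
set S := \sum_(i < k) _; set P := D ^ k; nia.
Qed.

Lemma sum_digits_inj m (f g : nat -> nat) :
  (forall i, i < m -> f i < D) -> (forall i, i < m -> g i < D) ->
  \sum_(i < m) D ^ i * f i = \sum_(i < m) D ^ i * g i ->
  forall i, i < m -> f i = g i.
Proof.
elim: m => [//|k IH] fD gD + i; rewrite !big_ord_recr /= => E.
have fD' j (lt : j < k) := fD j (ltnW lt); have gD' j (lt : j < k) := gD j (ltnW lt).
have lowE : \sum_(j < k) D ^ j * f j = \sum_(j < k) D ^ j * g j.
  have := congr1 (modn^~ (D ^ k)) E.
  by rewrite ![_ + D ^ k * _]addnC ![D ^ k * _]mulnC !modnMDl !modn_small ?sum_digits_lt.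
have topE : f k = g k.
  have D0 : 0 < D by apply: leq_ltn_trans (fD k _).
  by move: E; rewrite lowE => /addnI /eqP; rewrite eqn_pmul2l ?expn_gt0 ?D0 // => /eqP.
rewrite ltnS leq_eqVlt => /orP[/eqP -> // | lti].
exact: IH fD' gD' lowE i lti.
Qed.

End Digits.

Lemma poly_horner_eq0 (R : numDomainType) (p : {poly R}) :
  (forall t, p.[t] = 0) -> p = 0.
Proof.
move=> p0; apply: (@roots_geq_poly_eq0 _ _ [seq i%:R | i <- iota 0 (size p)]).
- by apply/allP => x _; apply/rootP.
- by rewrite map_inj_uniq ?iota_uniq // => i j /eqP; rewrite eqr_nat => /eqP.
- by rewrite size_map size_iota.
Qed.

Section Monomials.
Variables (R : realType) (n : nat).
Notation fn := ('rV[R]_n -> R).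
Notation mon := {ffun 'I_n -> nat}.
Notation rep := (seq (R * mon)).

Lemma mon_addE (k k' : mon) i : (k + k') i = (k i + k' i)%N.
Proof. by rewrite /= ffunE. Qed.

Lemma monomialD (k k' : mon) : monomial (k + k') = monomial k * monomial k' :> fn.
Proof.
apply/funext => x; rewrite /monomial mulrfctE -big_split; apply: eq_bigr => i _.
by rewrite mon_addE exprD.
Qed.

Definition mul_rep (l l' : rep) : rep := [seq (a.1 * b.1, a.2 + b.2) | a <- l, b <- l'].

Definition lincomb_rep (a b : R) (l l' : rep) : rep :=
  [seq (a * c.1, c.2) | c <- l] ++ [seq (b * c.1, c.2) | c <- l'].

Lemma is_polyrep_mul (l l' : rep) (p q : fn) :
  is_polyrep l p -> is_polyrep l' q -> is_polyrep (mul_rep l l') (p * q).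
Proof.
move=> -> ->; apply/funext => x.
rewrite mulrfctE big_allpairs_dep mulr_suml; apply: eq_bigr => a _.
by rewrite mulr_sumr; apply: eq_bigr => b _; rewrite monomialD mulrACA.
Qed.

Lemma sum_lincomb_rep (V : lmodType R) (Phi : mon -> V) a b (l l' : rep) :
  \sum_(c <- lincomb_rep a b l l') c.1 *: Phi c.2 =
  a *: \sum_(c <- l) c.1 *: Phi c.2 + b *: \sum_(c <- l') c.1 *: Phi c.2.
Proof.
by rewrite big_cat !big_map !scaler_sumr; congr (_ + _); apply: eq_bigr => c _;
  rewrite scalerA.
Qed.

Lemma is_polyrep_lincomb a b (l l' : rep) (p q : fn) :
  is_polyrep l p -> is_polyrep l' q -> is_polyrep (lincomb_rep a b l l') (a *: p + b *: q).
Proof.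
move=> -> ->; apply/funext => x; rewrite addrfctE !scalrfctE.
by symmetry; exact: (sum_lincomb_rep (fun k => monomial k x)).
Qed.

Lemma monomial_kronecker (D : nat) (k : mon) (t : R) :
  monomial k (\row_(i < n) t ^+ (D ^ i)) = t ^+ (\sum_(i < n) D ^ i * k i).
Proof. by rewrite /monomial -prodrXr; apply: eq_bigr => i _; rewrite mxE exprM. Qed.

Lemma kronecker_inj (D : nat) (k k' : mon) :
  (forall i, k i < D)%N -> (forall i, k' i < D)%N ->
  (\sum_(i < n) D ^ i * k i = \sum_(i < n) D ^ i * k' i)%N -> k = k'.
Proof.
move=> kD k'D E; apply/ffunP => i; rewrite -!(nth_fgraph_ord 0%N).
apply: (@sum_digits_inj D n) => // [j ltj|j ltj|].
- by rewrite (nth_fgraph_ord 0%N (Ordinal ltj)).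
- by rewrite (nth_fgraph_ord 0%N (Ordinal ltj)).
- by under eq_bigr do rewrite nth_fgraph_ord; under [RHS]eq_bigr do rewrite nth_fgraph_ord.
Qed.

(* Kronecker substitution [x_i := t ^ D^i] sends distinct monomials of degree
   [< D] in each variable to distinct powers of [t]. *)
Lemma polyrep0_coef_eq0 (l : rep) :
  is_polyrep l 0 -> forall k, \sum_(a <- l | a.2 == k) a.1 = 0.
Proof.
move=> l0 k; set D := (\max_(a <- l) \max_(i < n) a.2 i).+1.
have lD a : a \in l -> forall i, (a.2 i < D)%N.
  move=> al i; rewrite ltnS; apply: leq_trans (leq_bigmax_seq _ al isT).
  exact: (@leq_bigmax_cond _ xpredT (fun i : 'I_n => a.2 i)).
pose kron (k : mon) := (\sum_(i < n) D ^ i * k i)%N.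
have p0 : \sum_(a <- l) a.1 *: 'X^(kron a.2) = 0 :> {poly R}.
  apply: poly_horner_eq0 => t; rewrite horner_sum.
  transitivity ((0 : fn) (\row_(i < n) t ^+ (D ^ i))); last by [].
  by rewrite l0; apply: eq_bigr => a _; rewrite hornerZ hornerXn monomial_kronecker.
have [kD|] := boolP [forall i, k i < D]%N; last first.
  move=> /forallPn [i kiD]; rewrite big_seq_cond big1 // => a /andP [al /eqP ak].
  by move: kiD; rewrite -ak lD.
have := congr1 (fun q : {poly R} => q`_(kron k)) p0; rewrite coef_sum coef0 => p0k.
rewrite -[RHS]p0k big_mkcond /=; apply: eq_big_seq => a al; rewrite coefZ coefXn.
have [->|ak] := eqVneq a.2 k; first by rewrite eqxx mulr1.
case: eqP => [kE|]; last by rewrite mulr0.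
by move: ak; rewrite (kronecker_inj (lD a al) (forallP kD) (esym kE)) eqxx.
Qed.

Lemma polyrep_sum_eq (V : lmodType R) (Phi : mon -> V) (l l' : rep) (h : fn) :
  is_polyrep l h -> is_polyrep l' h ->
  \sum_(a <- l) a.1 *: Phi a.2 = \sum_(a <- l') a.1 *: Phi a.2.
Proof.
move=> hl hl'; apply/eqP; rewrite -subr_eq0.
have diff0 : is_polyrep (lincomb_rep 1 (-1) l l') 0.
  by have := is_polyrep_lincomb 1 (-1) hl hl'; rewrite scale1r scaleN1r subrr.
rewrite -[X in X - _]scale1r -scaleN1r -sum_lincomb_rep sum_scale_by_key.
by rewrite big1 // => k _; rewrite polyrep0_coef_eq0 ?scale0r.
Qed.

Lemma is_polyrep_xget (l : rep) (h : fn) :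
  is_polyrep l h -> is_polyrep (xget [::] (fun l => is_polyrep l h)) h.
Proof. by move=> hl; exact: (xgetPex [::] (ex_intro (fun l : rep => is_polyrep l h) l hl)). Qed.

Lemma lam_monoD (k k' : mon) :
  perm_eq (lam_mono R (k + k')) (lam_mono R k ++ lam_mono R k').
Proof.
apply/seq.permP => P; rewrite count_cat /lam_mono !count_flatten !sumnE !big_map.
by rewrite -big_split; apply: eq_bigr => i _; rewrite !count_nseq mon_addE mulnDr.
Qed.

Lemma smooth_lam_mono (k : mon) : {in lam_mono R k, forall f, smooth f}.
Proof. by move=> f /flattenP [s /mapP [i _ ->]] /nseqP [-> _]; exact: smooth_coord. Qed.

Lemma prod_lam_mono (k : mon) : \prod_(f <- lam_mono R k) f = monomial k.
Proof.
apply/funext => x; rewrite prodrfctE /lam_mono big_flatten big_map big_enum /=.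
by apply: eq_bigr => i _; rewrite big_nseq iter_mulr_1.
Qed.

End Monomials.

Lemma Pol_mul (R : realType) n (p q : 'rV[R]_n -> R) : Pol p -> Pol q -> Pol (p * q).
Proof. by move=> [l pl] [l' ql']; exists (mul_rep l l'); exact: is_polyrep_mul. Qed.

Lemma Pol_lincomb (R : realType) n (a b : R) (p q : 'rV[R]_n -> R) :
  Pol p -> Pol q -> Pol (a *: p + b *: q).
Proof. by move=> [l pl] [l' ql']; exists (lincomb_rep a b l l'); exact: is_polyrep_lincomb. Qed.

Lemma N0_lincomb (R : realType) n (a b : R) (F G : Defs.series R n) : N0 F -> N0 G ->
  N0 (sadd (sscale a F) (sscale b G)).
Proof.
move=> [sF PF] [sG PG]; split; last exact: Pol_lincomb.
by move=> m; exact: smooth_lincomb.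
Qed.

Section StarProduct.
Variables (R : realType) (n : nat).
Notation fn := ('rV[R]_n -> R).
Notation mon := {ffun 'I_n -> nat}.
Notation rep := (seq (R * mon)).
Variable C : nat -> fn -> fn -> fn.
Hypothesis smooth_C : forall r f g, smooth f -> smooth g -> smooth (C r f g).
Hypothesis C0_mul : forall f g, smooth f -> smooth g -> C 0%N f g = f * g.

Lemma smooth_cser (f : fn) m : smooth f -> smooth (cser f m).
Proof. by case: m => [|m] //= _; exact: smooth0. Qed.

Lemma smooth_star (F G : Defs.series R n) m :
  (forall i, smooth (F i)) -> (forall j, smooth (G j)) -> smooth (star C F G m).
Proof.
by move=> sF sG; apply: smooth_sum => i _; apply: smooth_sum => j _; exact: smooth_C.
Qed.

Lemma star_coef0 (F G : Defs.series R n) : smooth (F 0%N) -> smooth (G 0%N) ->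
  star C F G 0%N = F 0%N * G 0%N.
Proof. by move=> sF sG; rewrite /star big_ord1 big_ord1_cond /= C0_mul. Qed.

Lemma smooth_starfold (s : seq fn) m :
  {in s, forall f, smooth f} -> smooth (starfold C s m).
Proof.
elim: s m => [|f [|g s] IH] m ss /=.
- exact/smooth_cser/smooth_cst.
- by apply: smooth_cser; apply: ss; rewrite mem_head.
- apply: smooth_star => [i|j]; first by apply: smooth_cser; apply: ss; rewrite mem_head.
  by apply: IH => h hs; apply: ss; rewrite inE hs orbT.
Qed.

Lemma starfold_coef0 (s : seq fn) :
  {in s, forall f, smooth f} -> starfold C s 0%N = \prod_(f <- s) f.
Proof.
elim: s => [|f [|g s] IH] ss; first by rewrite big_nil.
  by rewrite big_seq1.
have sgs : {in g :: s, forall h, smooth h} by move=> h hs; apply: ss; rewrite inE hs orbT.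
have -> : starfold C [:: f, g & s] 0%N = cser f 0%N * starfold C (g :: s) 0%N.
  apply: (star_coef0 (F := cser f) (G := starfold C (g :: s))); last exact: smooth_starfold.
  by apply: ss; rewrite mem_head.
by rewrite IH // [RHS]big_cons.
Qed.

(* [T_pure C s] unfolds to [sym_star (size s) (nth 0 s)]; indexing the factors
   by [f] turns a permutation of them into a reindexing of the sum over ['S_k]. *)
Definition sym_star (k : nat) (f : nat -> fn) : Defs.series R n :=
  sscale (k`!%:R^-1)
    (fun m => \sum_(sg : 'S_k) starfold C [seq f (sg i : nat) | i <- enum 'I_k] m).

Lemma sym_star_perm k (p : 'S_k) (f g : nat -> fn) :
  (forall i : 'I_k, g i = f (p i)) -> sym_star k g = sym_star k f.
Proof.
move=> gE; congr sscale; apply/funext => m; rewrite [RHS](reindex_inj (mulIg p)) /=.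
by apply: eq_bigr => sg _; congr (starfold C _ m); apply: eq_map => i; rewrite gE permM.
Qed.

Lemma T_pure_perm (s t : seq fn) : perm_eq s t -> T_pure C s = T_pure C t.
Proof.
move=> st; have /tuple_permP [p tE] : perm_eq t (in_tuple s) by rewrite perm_sym.
change (sym_star (size s) (nth 0 s) = sym_star (size t) (nth 0 t)).
rewrite -(perm_size st); symmetry; apply: (sym_star_perm (p := p)) => i.
by rewrite tE -(tnth_nth 0) tnth_mktuple (tnth_nth 0).
Qed.

Lemma smooth_T_pure (s : seq fn) m :
  {in s, forall f, smooth f} -> smooth (T_pure C s m).
Proof.
move=> ss; rewrite /T_pure /sscale; apply: smoothZ; apply: smooth_sum => sg _.
by apply: smooth_starfold => f /mapP [i _ ->]; apply: ss; exact: mem_nth.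
Qed.

Lemma T_pure_coef0 (s : seq fn) :
  {in s, forall f, smooth f} -> T_pure C s 0%N = \prod_(f <- s) f.
Proof.
move=> ss; rewrite /T_pure /sscale.
have permE (sg : 'S_(size s)) :
    starfold C [seq nth 0 s (sg i) | i <- enum 'I_(size s)] 0%N = \prod_(f <- s) f.
  rewrite starfold_coef0; last by move=> f /mapP [i _ ->]; apply: ss; exact: mem_nth.
  rewrite big_map big_enum /= (big_nth 0) big_mkord.
  by rewrite [RHS](reindex_inj (@perm_inj _ sg)).
rewrite (eq_bigr _ (fun sg _ => permE sg)) sumr_const card_Sn -scalerMnr scalerMnl.
by rewrite -mulr_natr mulVf ?scale1r // pnatr_eq0 -lt0n fact_gt0.
Qed.

Lemma Tstar_mul (u v : tens R n) m : Tstar C (tens_mul u v) m =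
  \sum_(a <- u) \sum_(b <- v) (a.1 * b.1) *: T_pure C (a.2 ++ b.2) m.
Proof. by rewrite /Tstar /tens_mul big_allpairs_dep. Qed.

Definition lam_of_rep (l : rep) : tens R n := [seq (a.1, lam_mono R a.2) | a <- l].

Lemma Tstar_lam_of_rep (l : rep) m :
  Tstar C (lam_of_rep l) m = \sum_(a <- l) a.1 *: T_pure C (lam_mono R a.2) m.
Proof. by rewrite /Tstar big_map. Qed.

Lemma Tstar_lam_rep (l : rep) (h : fn) :
  is_polyrep l h -> Tstar C (lam h) = Tstar C (lam_of_rep l).
Proof.
move=> hl; apply/funext => m; rewrite !Tstar_lam_of_rep.
exact: (polyrep_sum_eq (fun k => T_pure C (lam_mono R k) m) (is_polyrep_xget hl) hl).
Qed.

(* [lambda] is an algebra morphism, and [T] does not see the order of the factors. *)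
Lemma Tstar_mul_lam_of_rep (l l' : rep) :
  Tstar C (tens_mul (lam_of_rep l) (lam_of_rep l')) = Tstar C (lam_of_rep (mul_rep l l')).
Proof.
apply/funext => m; rewrite Tstar_mul Tstar_lam_of_rep big_allpairs_dep big_map.
apply: eq_bigr => a _; rewrite big_map; apply: eq_bigr => b _.
by rewrite (T_pure_perm (lam_monoD R _ _)).
Qed.

Lemma Tstar_lam_coef0 (h : fn) : Pol h -> Tstar C (lam h) 0%N = h.
Proof.
move=> [l hl]; rewrite (Tstar_lam_rep hl) Tstar_lam_of_rep [RHS]hl.
apply/funext => x; rewrite fct_sumE; apply: eq_bigr => a _.
by rewrite T_pure_coef0 ?prod_lam_mono //; exact: smooth_lam_mono.
Qed.

Lemma smooth_Tstar_lam (h : fn) m : smooth (Tstar C (lam h) m).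
Proof.
rewrite (Tstar_lam_of_rep _ m); apply: smooth_sum => a _; apply: smoothZ.
exact/smooth_T_pure/smooth_lam_mono.
Qed.

Lemma Tstar_lam_lincomb (a b : R) (p q : fn) : Pol p -> Pol q ->
  Tstar C (lam (a *: p + b *: q))
    = sadd (sscale a (Tstar C (lam p))) (sscale b (Tstar C (lam q))).
Proof.
move=> [l pl] [l' ql'].
rewrite (Tstar_lam_rep (is_polyrep_lincomb a b pl ql')) (Tstar_lam_rep pl) (Tstar_lam_rep ql').
apply/funext => m; rewrite /sadd /sscale !Tstar_lam_of_rep.
exact: (sum_lincomb_rep (fun k => T_pure C (lam_mono R k) m)).
Qed.

Lemma sunE (F G : Defs.series R n) : N0 F -> N0 G ->
  sun C F G = Tstar C (lam (F 0%N * G 0%N)).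
Proof.
move=> [_ [l Fl]] [_ [l' Gl']].
rewrite (Tstar_lam_rep (is_polyrep_mul (is_polyrep_xget Fl) (is_polyrep_xget Gl'))).
exact: Tstar_mul_lam_of_rep.
Qed.

Lemma sun_coef0 (F G : Defs.series R n) : N0 F -> N0 G ->
  sun C F G 0%N = F 0%N * G 0%N.
Proof. by move=> NF NG; rewrite sunE // Tstar_lam_coef0 //; exact: Pol_mul NF.2 NG.2. Qed.

Lemma sun_N0 (F G : Defs.series R n) : N0 F -> N0 G -> N0 (sun C F G).
Proof.
move=> NF NG; split; first by move=> m; rewrite sunE //; exact: smooth_Tstar_lam.
by rewrite sun_coef0 //; exact: Pol_mul NF.2 NG.2.
Qed.

Lemma sun_comm (F G : Defs.series R n) : N0 F -> N0 G -> sun C F G = sun C G F.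
Proof. by move=> NF NG; rewrite !sunE // mulrC. Qed.

Lemma sun_assoc (F G H : Defs.series R n) : N0 F -> N0 G -> N0 H ->
  sun C F (sun C G H) = sun C (sun C F G) H.
Proof.
move=> NF NG NH; have NGH := sun_N0 NG NH; have NFG := sun_N0 NF NG.
by rewrite sunE // [RHS]sunE // !sun_coef0 // mulrA.
Qed.

Lemma sun_linear_l (a b : R) (F G H : Defs.series R n) : N0 F -> N0 G -> N0 H ->
  sun C (sadd (sscale a F) (sscale b G)) H
    = sadd (sscale a (sun C F H)) (sscale b (sun C G H)).
Proof.
move=> NF NG NH; move: (NF.2) (NG.2) (NH.2) => PF PG PH.
rewrite !sunE //; last exact: N0_lincomb.
have -> : sadd (sscale a F) (sscale b G) 0%N * H 0%N
    = a *: (F 0%N * H 0%N) + b *: (G 0%N * H 0%N).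
  by rewrite /sadd /sscale /= mulrDl; congr (_ + _); apply/funext => x;
    exact: esym (mulrA _ _ _).
by rewrite Tstar_lam_lincomb //; exact: Pol_mul.
Qed.

(* [(1 + nu) . 1 = 1 . 1], since only nu^0-coefficients matter, whereas
   [(1 + nu) (1 . 1)] has nu^1-coefficient [(1 . 1)_1 + 1]. *)
Lemma sun_not_nu_linear_l : ~ (forall (a b : nat -> R) (F G H : Defs.series R n),
  N0 F -> N0 G -> N0 H ->
  sun C (sadd (smul a F) (smul b G)) H = sadd (smul a (sun C F H)) (smul b (sun C G H))).
Proof.
pose one : Defs.series R n := cser (@cst_fn R n 1).
have None : N0 one.
  split; first by move=> m; apply/smooth_cser/smooth_cst.
  exists [:: (1, [ffun=> 0%N])]; apply/funext => x.
  by rewrite big_seq1 /monomial big1 ?mul1r // => i _; rewrite ffunE.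
pose delta (k i : nat) : R := (i == k)%:R.
move=> /(_ (delta 0%N) (delta 1%N) one one one None None None).
set X := sadd _ _; have X0 : Defs.proj X = Defs.proj one.
  by rewrite /Defs.proj /X /sadd /smul !big_ord1 /delta /= scale1r scale0r addr0.
rewrite {1}/sun X0 -/(sun C one one) => /(congr1 (fun S => S 1%N)).
rewrite /sadd /smul !big_ord_recr !big_ord0 /delta /= subn0 subnn.
rewrite !scale0r !scale1r !add0r !addr0 => E.
have : sun C one one 0%N = 0 by apply: (addrI (sun C one one 1%N)); rewrite addr0 -E.
rewrite sun_coef0 // => /(congr1 (fun f : fn => f 0)) /=.
by rewrite mulrfctE /cst_fn mulr1 => /eqP; rewrite oner_eq0.
Qed.

End StarProduct.

Unset Implicit Arguments.

Theorem lemma1 (R : realType) (n : nat)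
    (P : ('rV[R]_n -> R) -> ('rV[R]_n -> R) -> ('rV[R]_n -> R))
    (C : nat -> ('rV[R]_n -> R) -> ('rV[R]_n -> R) -> ('rV[R]_n -> R)) :
  is_poisson P -> is_star_product P C ->
  [/\ (* sun is a product on N^0_nu *)
      (forall F G, N0 F -> N0 G -> N0 (sun C F G)),
      (* Abelian *)
      (forall F G, N0 F -> N0 G -> sun C F G = sun C G F),
      (* associative *)
      (forall F G H, N0 F -> N0 G -> N0 H ->
          sun C F (sun C G H) = sun C (sun C F G) H),
      (* R-bilinear *)
      (forall (a b : R) F G H, N0 F -> N0 G -> N0 H ->
          sun C (sadd (sscale a F) (sscale b G)) H
            = sadd (sscale a (sun C F H)) (sscale b (sun C G H)) /\
          sun C H (sadd (sscale a F) (sscale b G))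
            = sadd (sscale a (sun C H F)) (sscale b (sun C H G))) &
      (* not R[[nu]]-bilinear *)
      ~ (forall (a b : nat -> R) F G H, N0 F -> N0 G -> N0 H ->
          sun C (sadd (smul a F) (smul b G)) H
            = sadd (smul a (sun C F H)) (smul b (sun C G H)) /\
          sun C H (sadd (smul a F) (smul b G))
            = sadd (smul a (sun C H F)) (smul b (sun C H G)))].
Proof.
move=> _ [smooth_C [_ [_ [C0_mul _]]]]; split.
- by move=> F G; exact: sun_N0.
- by move=> F G; exact: sun_comm.
- by move=> F G H; exact: sun_assoc.
- move=> a b F G H NF NG NH; have NX := N0_lincomb a b NF NG.
  by rewrite !(sun_comm C NH) //; split; exact: sun_linear_l.
- move=> lin; apply: (sun_not_nu_linear_l smooth_C C0_mul) => a b F G H NF NG NH.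
  by case: (lin a b F G H NF NG NH).
Qed.
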